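(* Let $\Omega=\{1,\dots,n\}$ be a finite ground set, let $\hat f:2^\Omega\to\mathbb{R}$ be any set function, let $b>0$ be a budget and let $c_i$, $i\in\Omega$, be costs with $0<c_i\le b$ for all $i$. Run the following procedure: set $X_1\leftarrow\emptyset$ and $k\leftarrow\arg\min_{i\in\Omega}\hat f(\{i\})/c_i$; while $c_k\le b-\sum_{i\in X_1}c_i$, set $X_1\leftarrow X_1\cup\{k\}$ and $k\leftarrow\arg\min_{i\in\Omega\setminus X_1}\hat f(X_1\cup\{i\})/c_i$ (ties broken arbitrarily); when the loop stops, set $a\leftarrow k$. Let $X_{\mathrm{greedy1}}=X_1$ and $X_{\mathrm{greedy1a}}=X_1\cup\{a\}$, and define $$\beta=1-\prod_{i\in X_{\mathrm{greedy1}}}\Big(1-\frac{c_i}{b}\Big),\qquad \beta_a=1-\prod_{i\in X_{\mathrm{greedy1a}}}\Big(1-\frac{c_i}{b}\Big).$$ Let $\gamma\in(0,1]$ be such that $\sum_{i\in X_{\mathrm{greedy1}}}c_i=\gamma b$. Then $\beta\in(1-e^{-\gamma},1]$ and $\beta_a\in(1-\gamma e^{-\gamma},1]$.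
   Context: This is the first phase of a cost-effective forward greedy selection for budget-constrained minimization of $\hat f$ over sets $X$ with $\sum_{i\in X}c_i\le b$; $\gamma$ is the fraction of the budget used by the set $X_1$ produced by that phase, and $a$ is the element that the greedy rule would add next but which no longer fits the remaining budget. *)

From HB Require Import structures.
From mathcomp Require Import all_boot all_order all_algebra.
From mathcomp Require Import all_classical all_reals all_analysis.
Set Implicit Arguments. Unset Strict Implicit. Unset Printing Implicit Defensive.
Import Order.TTheory GRing.Theory Num.Theory.
Local Open Scope ring_scope.

Definition prefix_set (n : nat) (s : seq 'I_n) (j : nat) : {set 'I_n} :=
  [set x in take j s].

Definition cost_sum (R : realType) (n : nat) (c : 'I_n -> R) (X : {set 'I_n}) : R :=
  \sum_(i in X) c i.

(* [greedy_phase1 f c b X1 a]: (X1, a) is a possible outcome (ties broken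
   arbitrarily) of the first phase of the cost-effective forward greedy:
   s is the sequence of elements added in order; the j-th added element
   minimizes f(X_j ∪ {i}) / c_i over i ∉ X_j and fits the remaining budget;
   at the end a minimizes f(X1 ∪ {i}) / c_i over i ∉ X1 and does not fit. *)
Definition greedy_phase1 (R : realType) (n : nat) (f : {set 'I_n} -> R)
    (c : 'I_n -> R) (b : R) (X1 : {set 'I_n}) (a : 'I_n) : Prop :=
  exists s : seq 'I_n,
    X1 = [set x in s] /\
    (forall j : nat, (j < size s)%N ->
       let Xj := prefix_set s j in
       let k := nth a s j in
       [/\ k \notin Xj,
           (forall i, i \notin Xj ->
              f (Xj :|: [set k]) / c k <= f (Xj :|: [set i]) / c i)
         & c k <= b - cost_sum c Xj]) /\
    [/\ a \notin X1,
        (forall i, i \notin X1 ->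
           f (X1 :|: [set a]) / c a <= f (X1 :|: [set i]) / c i)
      & b - cost_sum c X1 < c a].

Definition beta (R : realType) (n : nat) (c : 'I_n -> R) (b : R) (X : {set 'I_n}) : R :=
  1 - \prod_(i in X) (1 - c i / b).

From HB Require Import structures.
From mathcomp Require Import all_boot all_order all_algebra.
From mathcomp Require Import all_classical all_reals all_analysis.
Set Implicit Arguments. Unset Strict Implicit. Unset Printing Implicit Defensive.
Import Order.TTheory GRing.Theory Num.Theory.
Local Open Scope ring_scope.

(* With x_i = c_i / b, beta(X) = 1 - prod (1 - x_i) and 1 - x < e^-x (strictly
   for x != 0) give beta(X1) > 1 - e^-gamma.  When the loop stops, a does not
   fit, so 1 - x_a < gamma, and beta(X1 + a) = 1 - (1 - x_a)(1 - beta(X1))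
   > 1 - gamma e^-gamma. *)

Section ProdOneMinusExpR.
Variables (R : realType) (I : finType) (x : I -> R).

Lemma prod_1B_le_expR (P : pred I) :
  (forall i, P i -> x i <= 1) ->
  \prod_(i | P i) (1 - x i) <= expR (- \sum_(i | P i) x i).
Proof.
move=> x_le1; rewrite -sumrN expR_sum; apply: ler_prod => i Pi.
by rewrite subr_ge0 x_le1 //= expR_ge1Dx.
Qed.

Lemma prod_1B_lt_expR (P : pred I) (j : I) :
  (forall i, P i -> x i <= 1) -> P j -> x j != 0 ->
  \prod_(i | P i) (1 - x i) < expR (- \sum_(i | P i) x i).
Proof.
move=> x_le1 Pj xj_neq0.
rewrite (bigD1 j Pj) [in X in _ < X](bigD1 j Pj) /= opprD expRD.
have rest_le : \prod_(i | P i && (i != j)) (1 - x i)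
    <= expR (- \sum_(i | P i && (i != j)) x i).
  by apply: prod_1B_le_expR => i /andP[Pi _]; exact: x_le1.
apply: (le_lt_trans (ler_wpM2l _ rest_le)); first by rewrite subr_ge0 x_le1.
by rewrite ltr_pM2r ?expR_gt0 // expR_gt1Dx // oppr_eq0.
Qed.

End ProdOneMinusExpR.

Section Beta.
Variables (R : realType) (n : nat) (c : 'I_n -> R) (b : R).

Lemma beta_setU1 (X : {set 'I_n}) (a : 'I_n) : a \notin X ->
  beta c b (X :|: [set a]) = 1 - (1 - c a / b) * (1 - beta c b X).
Proof. by move=> aX; rewrite /beta finset.setUC big_setU1 // !subKr. Qed.

Hypotheses (b_gt0 : 0 < b) (c_range : forall i, 0 < c i <= b).

Lemma cost_ratio_le1 (i : 'I_n) : c i / b <= 1.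
Proof. by rewrite ler_pdivrMr // mul1r; case/andP: (c_range i). Qed.

Lemma beta_le1 (X : {set 'I_n}) : beta c b X <= 1.
Proof.
rewrite /beta gerBl; apply: prodr_ge0 => i _.
by rewrite subr_ge0 cost_ratio_le1.
Qed.

Lemma beta_gt_1B_expR (X : {set 'I_n}) : X != finset.set0 ->
  1 - expR (- (cost_sum c X / b)) < beta c b X.
Proof.
case/set0Pn=> j jX; rewrite /beta ltrD2l ltrN2 /cost_sum mulr_suml.
apply: (prod_1B_lt_expR (x := fun i => c i / b) _ jX).
  by move=> i _; exact: cost_ratio_le1.
by rewrite mulf_neq0 ?invr_eq0 ?gt_eqF //; case/andP: (c_range j).
Qed.

End Beta.

Theorem proposition3 (R : realType) (n : nat) (f : {set 'I_n} -> R)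
    (c : 'I_n -> R) (b : R) :
  0 < b -> (forall i, 0 < c i <= b) ->
  forall (X1 : {set 'I_n}) (a : 'I_n), greedy_phase1 f c b X1 a ->
  forall gamma : R, 0 < gamma <= 1 -> cost_sum c X1 = gamma * b ->
  (1 - expR (- gamma) < beta c b X1 <= 1) /\
  (1 - gamma * expR (- gamma) < beta c b (X1 :|: [set a]) <= 1).
Proof.
move=> b_gt0 c_range X1 a [_ [_ [_ [aX1 _ a_overflows]]]] gamma /andP[gamma_gt0 _]
  costX1.
have gammaE : gamma = cost_sum c X1 / b by rewrite costX1 mulfK ?gt_eqF.
have X1_neq0 : X1 != finset.set0.
  apply: contra_neq (lt0r_neq0 (mulr_gt0 gamma_gt0 b_gt0)) => X1E.
  by rewrite -costX1 X1E /cost_sum big_set0.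
have beta_X1_gt : 1 - expR (- gamma) < beta c b X1.
  by rewrite gammaE beta_gt_1B_expR.
have a_does_not_fit : 1 - c a / b < gamma.
  by rewrite ltrBlDr -ltrBlDl ltr_pdivlMr // mulrBl mul1r -costX1.
split; apply/andP; split; rewrite ?beta_le1 // beta_setU1 //.
rewrite ltrD2l ltrN2 ltr_pM //.
- by rewrite subr_ge0 cost_ratio_le1.
- by rewrite subr_ge0 beta_le1.
by rewrite ltrBlDl -ltrBlDr.
Qed.
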